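(* Let $s\in\mathbb{C}$ with $\sigma=\operatorname{Re}s>1$, let $\beta\ne0$ be complex and $n_0>1+|\beta|$ an integer. With $\gamma_{k_0}=\big|1+\frac{s-1}{k_0+1}\big|$, let $k_0$ be a positive integer such that $\gamma_{k_0}<\frac{n_0-1}{|\beta|}$. Let $\mathcal{D}_{n_0}\in\{\mathcal{X}_{n_0},\mathcal{Y}_{n_0},\mathcal{Z}_{n_0}\}$. Then $$\Big|\sum_{k\ge k_0}\binom{-s}{k}\beta^k\mathcal{D}_{n_0}(s+k)\Big|\le\frac{2|\beta|^{k_0}(n_0-1)^{3-\sigma-k_0}}{(\sigma+k_0-2)(n_0-1-\gamma_{k_0}|\beta|)}\Big|\binom{-s}{k_0}\Big|.$$
   Context: Pascal's rhombus consists of integers $r_{i,j}$ for $i\ge0$, $j\in\mathbb{Z}$, with $r_{0,j}=0$ for all $j$, $r_{1,0}=1$, $r_{1,j}=0$ for $j\ne0$, and $r_{i,j}=r_{i-1,j-1}+r_{i-1,j}+r_{i-1,j+1}+r_{i-2,j}$ for $i\ge2$. For $n\ge1$: $x(n)$ is the number of $j$ with $r_{n,j}$ odd; $y(n)$ the number of $j$ with $r_{2n-1,2j}$ odd; $z(n)$ the number of $j$ with $r_{2n,2j-1}$ odd. $\mathcal{X}_{n_0}(s)=\sum_{n\ge n_0}x(n)n^{-s}$, $\mathcal{Y}_{n_0}(s)=\sum_{n\ge n_0}y(n)n^{-s}$, $\mathcal{Z}_{n_0}(s)=\sum_{n\ge n_0}z(n)n^{-s}$. *)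

From Stdlib Require Import Reals ZArith List Lia.
From Coquelicot Require Import Coquelicot.
Open Scope R_scope.

(* Pascal's rhombus: rr i = (r_i, r_{i+1}) as functions of j : Z. *)
Fixpoint rr (i : nat) : (Z -> Z) * (Z -> Z) :=
  match i with
  | O => (fun _ => 0%Z, fun j => if Z.eqb j 0 then 1%Z else 0%Z)
  | S i' => let (a, b) := rr i' in
            (b, fun j => (b (j - 1) + b j + b (j + 1) + a j)%Z)
  end.

Definition r (i : nat) (j : Z) : Z := fst (rr i) j.

Definition zrange (N : nat) : list Z :=
  map (fun k => (Z.of_nat k - Z.of_nat N)%Z) (seq 0 (2 * N + 1)).

Definition count_odd (f : Z -> Z) (N : nat) : nat :=
  length (filter (fun j => Z.odd (f j)) (zrange N)).

(* r_{i,j} = 0 for |j| >= i (proved below), so the windows used here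
   contain all j with a nonzero (hence all with an odd) entry. *)
Definition x (n : nat) : nat := count_odd (fun j => r n j) n.
Definition y (n : nat) : nat := count_odd (fun j => r (2 * n - 1) (2 * j)%Z) (2 * n).
Definition z (n : nat) : nat := count_odd (fun j => r (2 * n) (2 * j - 1)%Z) (2 * n).

Lemma rr_support (i : nat) :
  (forall j, (Z.of_nat i <= Z.abs j)%Z -> fst (rr i) j = 0%Z) /\
  (forall j, (Z.of_nat i + 1 <= Z.abs j)%Z -> snd (rr i) j = 0%Z).
Proof.
  induction i as [|i [IH1 IH2]]; simpl.
  - split; [reflexivity|]. intros j Hj. destruct (Z.eqb_spec j 0); lia.
  - destruct (rr i) as [a b] eqn:E; simpl in *. split.
    + intros j Hj. apply IH2. lia.
    + intros j Hj. rewrite IH2 by lia. rewrite IH2 by lia. rewrite IH2 by lia.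
      rewrite IH1 by lia. reflexivity.
Qed.

Lemma r_support (i : nat) (j : Z) : (Z.of_nat i <= Z.abs j)%Z -> r i j = 0%Z.
Proof. apply (proj1 (rr_support i)). Qed.

Definition Cre (c : C) : R := fst c.
Definition Cim (c : C) : R := snd c.

Fixpoint Cpow_nat (c : C) (k : nat) : C :=
  match k with O => RtoC 1 | S k' => Cmult (Cpow_nat c k') c end.

(* n^{-s} = exp(-s ln n) for a positive integer n *)
Definition npow_neg (n : nat) (s : C) : C :=
  (exp (- Cre s * ln (INR n)) * cos (Cim s * ln (INR n)),
   - (exp (- Cre s * ln (INR n)) * sin (Cim s * ln (INR n)))).

(* generalized binomial coefficient binom(w, k) = w(w-1)...(w-k+1)/k! *)
Fixpoint cbinom (w : C) (k : nat) : C :=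
  match k with
  | O => RtoC 1
  | S k' => Cdiv (Cmult (cbinom w k') (Cminus w (RtoC (INR k')))) (RtoC (INR k))
  end.

(* The Dirichlet series D_{n0}(s) = sum_{n >= n0} a(n) n^{-s},
   its value taken componentwise with Coquelicot's Series
   (equal to the sum whenever the series converges). *)
Definition dir_term (a : nat -> nat) (n0 : nat) (s : C) (n : nat) : C :=
  Cmult (RtoC (INR (a (n + n0)%nat))) (npow_neg (n + n0)%nat s).

Definition dirichlet (a : nat -> nat) (n0 : nat) (s : C) : C :=
  (Series (fun n => Cre (dir_term a n0 s n)), Series (fun n => Cim (dir_term a n0 s n))).

Definition gamma (s : C) (k0 : nat) : R :=
  Cmod (Cplus (RtoC 1) (Cdiv (Cminus s (RtoC 1)) (RtoC (INR (k0 + 1))))).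

(* Since r_{i,j} = 0 for |j| >= i, each of x(n), y(n), z(n) is at most 2n, and
   comparing sum_{n >= n0} n^(1 - Re w) with the integral of t^(1 - Re w) over [n0 - 1, oo)
   gives |D_{n0}(w)| <= 2 (n0 - 1)^(2 - Re w) / (Re w - 2) for Re w > 2.  The moduli of
   consecutive binomial coefficients binom(-s, m) have ratio gamma_m, which decreases in m,
   so |binom(-s, k0 + k)| <= |binom(-s, k0)| gamma_{k0}^k.  Hence the k-th term of the series
   is dominated by a geometric sequence of ratio gamma_{k0} |beta| / (n0 - 1) < 1, whose sum
   is the stated bound. *)

From Stdlib Require Import Reals Lra Lia ZArith List FinFun.
From Coquelicot Require Import Coquelicot.
Open Scope R_scope.

Lemma count_odd_le (f : Z -> Z) (N : nat) (lo hi : Z) :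
  (forall j, Z.odd (f j) = true -> (lo <= j <= hi)%Z) ->
  (count_odd f N <= Z.to_nat (hi - lo + 1))%nat.
Proof.
  intros Hf. unfold count_odd.
  rewrite <- (length_seq (Z.to_nat (hi - lo + 1)) 0).
  rewrite <- (length_map (fun k => (lo + Z.of_nat k)%Z)).
  apply NoDup_incl_length.
  - apply NoDup_filter, Injective_map_NoDup; [intros u v E; lia | apply seq_NoDup].
  - intros j Hj. apply filter_In in Hj. specialize (Hf j (proj2 Hj)).
    apply in_map_iff. exists (Z.to_nat (j - lo)). split; [lia | apply in_seq; lia].
Qed.

Lemma r_odd_abs_lt (i : nat) (j : Z) : Z.odd (r i j) = true -> (Z.abs j < Z.of_nat i)%Z.
Proof.
  intros Hodd. apply Z.nle_gt. intros Hj.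
  rewrite (r_support i j Hj) in Hodd. discriminate.
Qed.

Lemma x_le (n : nat) : (x n <= 2 * n)%nat.
Proof.
  unfold x. eapply Nat.le_trans.
  - apply (count_odd_le _ _ (1 - Z.of_nat n) (Z.of_nat n - 1)).
    intros j Hj. apply r_odd_abs_lt in Hj. lia.
  - lia.
Qed.

Lemma y_le (n : nat) : (y n <= 2 * n)%nat.
Proof.
  unfold y. eapply Nat.le_trans.
  - apply (count_odd_le _ _ (1 - Z.of_nat n) (Z.of_nat n - 1)).
    intros j Hj. apply r_odd_abs_lt in Hj. lia.
  - lia.
Qed.

Lemma z_le (n : nat) : (z n <= 2 * n)%nat.
Proof.
  unfold z. eapply Nat.le_trans.
  - apply (count_odd_le _ _ (1 - Z.of_nat n) (Z.of_nat n)).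
    intros j Hj. apply r_odd_abs_lt in Hj. lia.
  - lia.
Qed.

Lemma rhombus_count_le (D : nat -> nat) :
  (D = x \/ D = y \/ D = z) -> forall n, INR (D n) <= 2 * INR n.
Proof.
  intros HD n. change 2 with (INR 2). rewrite <- mult_INR. apply le_INR.
  destruct HD as [-> | [-> | ->]]; [apply x_le | apply y_le | apply z_le].
Qed.

Lemma fst_sum_n (a : nat -> C) (N : nat) : fst (sum_n a N) = sum_n (fun n => fst (a n)) N.
Proof. induction N; [reflexivity | rewrite !sum_Sn; simpl; now rewrite <- IHN]. Qed.

Lemma snd_sum_n (a : nat -> C) (N : nat) : snd (sum_n a N) = sum_n (fun n => snd (a n)) N.
Proof. induction N; [reflexivity | rewrite !sum_Sn; simpl; now rewrite <- IHN]. Qed.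

Lemma is_series_C_fst (a : nat -> C) (l : C) :
  is_series a l -> is_series (fun n => fst (a n)) (fst l).
Proof.
  intros Hl. apply (filterlim_ext (fun N => fst (sum_n a N))); [apply fst_sum_n|].
  eapply filterlim_comp; [exact Hl|].
  intros P [eps HP]. exists eps. intros u [Hu _]. exact (HP _ Hu).
Qed.

Lemma is_series_C_snd (a : nat -> C) (l : C) :
  is_series a l -> is_series (fun n => snd (a n)) (snd l).
Proof.
  intros Hl. apply (filterlim_ext (fun N => snd (sum_n a N))); [apply snd_sum_n|].
  eapply filterlim_comp; [exact Hl|].
  intros P [eps HP]. exists eps. intros u [_ Hu]. exact (HP _ Hu).
Qed.

Lemma dirichlet_is_series (a : nat -> nat) (n0 : nat) (w l : C) :
  is_series (dir_term a n0 w) l -> dirichlet a n0 w = l.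
Proof.
  intros Hl. unfold dirichlet, Cre, Cim.
  rewrite (is_series_unique _ _ (is_series_C_fst _ _ Hl)),
          (is_series_unique _ _ (is_series_C_snd _ _ Hl)).
  now destruct l.
Qed.

Lemma is_series_C_bounded (a : nat -> C) (b : nat -> R) (B : R) :
  (forall n, Cmod (a n) <= b n) -> (forall N, sum_n b N <= B) ->
  exists l, is_series a l /\ Cmod l <= B.
Proof.
  intros Hab HB.
  assert (Hb0 : forall n, 0 <= b n) by (intros n; eapply Rle_trans; [apply Cmod_ge_0 | apply Hab]).
  assert (Hb : ex_series b).
  { apply (ex_finite_lim_seq_incr _ B); [|exact HB].
    intros n. rewrite sum_Sn. unfold plus; simpl. specialize (Hb0 (S n)). lra. }
  destruct (@ex_series_le C_AbsRing C_CompleteNormedModule a b Hab Hb) as [l Hl].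
  exists l. split; [exact Hl|].
  assert (Hnorm : is_lim_seq (fun N => norm (sum_n a N)) (norm l))
    by (eapply filterlim_comp; [exact Hl | apply filterlim_norm]).
  assert (Hpartial : forall N, norm (sum_n a N) <= B).
  { intros N. eapply Rle_trans; [apply (norm_sum_n_m a 0 N)|].
    eapply Rle_trans; [|apply (HB N)]. apply sum_n_m_le. exact Hab. }
  exact (is_lim_seq_le _ _ _ _ Hpartial Hnorm (is_lim_seq_const B)).
Qed.

Lemma ln_le_sub1 (u : R) : 0 < u -> ln u <= u - 1.
Proof.
  intros Hu. pose proof (exp_ineq1_le (ln u)) as H. rewrite exp_ln in H by exact Hu. lra.
Qed.

Lemma Rpower_gt_0 (u v : R) : 0 < Rpower u v.
Proof. apply exp_pos. Qed.

(* The tangent-line inequality for the convex function [t ^ -p] at [t = m]. *)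
Lemma Rpower_opp_diff_ge (p m : R) : 0 < p -> 1 < m ->
  p * Rpower m (- p - 1) <= Rpower (m - 1) (- p) - Rpower m (- p).
Proof.
  intros Hp Hm. set (E := Rpower m (- p)). set (L := ln m - ln (m - 1)).
  assert (HE : 0 < E) by apply Rpower_gt_0.
  assert (Hstep : Rpower m (- p - 1) = E / m).
  { unfold Rminus at 1. rewrite Rpower_plus, (Rpower_Ropp m 1), Rpower_1 by lra. reflexivity. }
  assert (Hprev : Rpower (m - 1) (- p) = E * exp (p * L)).
  { unfold E, L, Rpower. rewrite <- exp_plus. f_equal. ring. }
  assert (HL : 1 / m <= L).
  { pose proof (ln_le_sub1 ((m - 1) / m)) as Hln.
    rewrite ln_div in Hln by lra. unfold L.
    assert ((m - 1) / m - 1 = - (1 / m)) by (field; lra).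
    assert (0 < (m - 1) / m) by (apply Rdiv_lt_0_compat; lra). lra. }
  assert (Hexp : 1 + p / m <= exp (p * L)).
  { eapply Rle_trans; [|apply exp_ineq1_le].
    assert (p * (1 / m) <= p * L) by (apply Rmult_le_compat_l; lra).
    unfold Rdiv in *. lra. }
  rewrite Hstep, Hprev.
  apply Rmult_le_compat_l with (r := E) in Hexp; [|lra].
  replace (p * (E / m)) with (E * (p / m)) by (field; lra). lra.
Qed.

Lemma Cmod_npow_neg (n : nat) (w : C) : Cmod (npow_neg n w) = Rpower (INR n) (- Cre w).
Proof.
  unfold npow_neg, Cmod, Rpower. cbn [fst snd].
  set (E := exp (- Cre w * ln (INR n))). set (t := Cim w * ln (INR n)).
  replace ((E * cos t) ^ 2 + (- (E * sin t)) ^ 2) with (E ^ 2 * (Rsqr (sin t) + Rsqr (cos t)))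
    by (unfold Rsqr; ring).
  rewrite sin2_cos2, Rmult_1_r. apply sqrt_pow2. left; apply exp_pos.
Qed.

Lemma sum_n_telescope (c : R) (g : nat -> R) (N : nat) :
  sum_n (fun n => c * (g n - g (S n))) N = c * (g O - g (S N)).
Proof.
  induction N; [apply sum_O|]. rewrite sum_Sn, IHN. unfold plus; simpl. ring.
Qed.

Lemma Cmod_dir_term_le (a : nat -> nat) (c : R) (n0 n : nat) (w : C) :
  (2 <= n0)%nat -> 2 < Cre w -> 0 <= c -> (forall n, (n0 <= n)%nat -> INR (a n) <= c * INR n) ->
  Cmod (dir_term a n0 w n) <=
    c / (Cre w - 2) * (Rpower (INR (n + n0) - 1) (2 - Cre w) - Rpower (INR (S n + n0) - 1) (2 - Cre w)).
Proof.
  intros Hn0 Hw Hc Ha. set (p := Cre w - 2).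
  unfold dir_term. rewrite Cmod_mult, Cmod_R, Rabs_pos_eq, Cmod_npow_neg by apply pos_INR.
  assert (Hm : 2 <= INR (n + n0)) by (apply (le_INR 2); lia).
  replace (INR (S n + n0) - 1) with (INR (n + n0)) by (rewrite !plus_INR, S_INR; ring).
  replace (2 - Cre w) with (- p) by (unfold p; ring).
  set (m := INR (n + n0)) in *.
  assert (Hpow : m * Rpower m (- Cre w) = Rpower m (- p - 1)).
  { rewrite <- (Rpower_1 m) at 1 by lra. rewrite <- Rpower_plus. f_equal. unfold p. ring. }
  pose proof (Rpower_opp_diff_ge p m ltac:(unfold p; lra) ltac:(lra)) as Htangent.
  apply Rle_trans with (c * (m * Rpower m (- Cre w))).
  - rewrite <- Rmult_assoc. apply Rmult_le_compat_r; [left; apply Rpower_gt_0 | apply Ha; lia].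
  - rewrite Hpow. unfold Rdiv. rewrite Rmult_assoc. apply Rmult_le_compat_l; [exact Hc|].
    rewrite Rmult_comm. apply Rle_div_r; [unfold p; lra | lra].
Qed.

(* [n^(1 - Re w)] is dominated by the increments of [t^(2 - Re w) / (Re w - 2)], which telescope. *)
Lemma dirichlet_Cmod_le (a : nat -> nat) (c : R) (n0 : nat) (w : C) :
  (2 <= n0)%nat -> 2 < Cre w -> (forall n, (n0 <= n)%nat -> INR (a n) <= c * INR n) ->
  Cmod (dirichlet a n0 w) <= c * Rpower (INR n0 - 1) (2 - Cre w) / (Cre w - 2).
Proof.
  intros Hn0 Hw Ha.
  assert (Hc : 0 <= c).
  { assert (2 <= INR n0) by (apply (le_INR 2); exact Hn0).
    pose proof (Ha n0 (le_n n0)). pose proof (pos_INR (a n0)). nra. }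
  set (g := fun n => Rpower (INR (n + n0) - 1) (2 - Cre w)).
  destruct (is_series_C_bounded (dir_term a n0 w) (fun n => c / (Cre w - 2) * (g n - g (S n)))
             (c / (Cre w - 2) * g O) (fun n => Cmod_dir_term_le a c n0 n w Hn0 Hw Hc Ha))
    as [l [Hl Hlb]].
  - intros N. rewrite sum_n_telescope.
    assert (0 < g (S N)) by apply Rpower_gt_0.
    assert (0 <= c / (Cre w - 2)) by (apply Rdiv_le_0_compat; lra).
    nra.
  - rewrite (dirichlet_is_series _ _ _ _ Hl).
    replace (c * Rpower (INR n0 - 1) (2 - Cre w) / (Cre w - 2)) with (c / (Cre w - 2) * g O)
      by (unfold g; simpl; field; lra).
    exact Hlb.
Qed.

Lemma sum_n_geom_le (K q : R) (N : nat) : 0 <= K -> 0 <= q < 1 ->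
  sum_n (fun k => K * q ^ k) N <= K / (1 - q).
Proof.
  intros HK Hq.
  change (sum_n (fun k => mult (K : R_Ring) (q ^ k)) N <= K / (1 - q)).
  rewrite sum_n_mult_l, sum_n_Reals, tech3 by lra.
  change (mult K ?t) with (K * t).
  assert (0 <= q ^ S N) by (apply pow_le; lra).
  unfold Rdiv. rewrite <- Rmult_assoc. apply Rmult_le_compat_r; [left; apply Rinv_0_lt_compat; lra|].
  nra.
Qed.

Lemma gamma_sqrt (s : C) (m : nat) :
  gamma s m = sqrt ((1 + (Cre s - 1) / (INR m + 1)) ^ 2 + (Cim s / (INR m + 1)) ^ 2).
Proof.
  unfold gamma, Cmod. rewrite plus_INR. pose proof (pos_INR m).
  f_equal. unfold Cre, Cim. simpl. field. lra.
Qed.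

Lemma gamma_S_le (s : C) (m : nat) : 1 <= Cre s -> gamma s (S m) <= gamma s m.
Proof.
  intros Hs. rewrite !gamma_sqrt, S_INR. apply sqrt_le_1_alt.
  set (u := INR m + 1). assert (Hu : 1 <= u) by (pose proof (pos_INR m); unfold u; lra).
  assert (Hinv : 0 < / (u + 1) <= / u).
  { split; [apply Rinv_0_lt_compat; lra | apply Rinv_le_contravar; lra]. }
  assert (Hre : 0 <= (Cre s - 1) / (u + 1) <= (Cre s - 1) / u).
  { unfold Rdiv. split; [apply Rmult_le_pos; lra | apply Rmult_le_compat_l; lra]. }
  assert (Him : (Cim s / (u + 1)) ^ 2 <= (Cim s / u) ^ 2).
  { unfold Rdiv. rewrite !Rpow_mult_distr.
    apply Rmult_le_compat_l; [apply pow2_ge_0 | apply pow_incr; lra]. }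
  replace (INR m + 1 + 1) with (u + 1) by reflexivity.
  assert ((1 + (Cre s - 1) / (u + 1)) ^ 2 <= (1 + (Cre s - 1) / u) ^ 2) by (apply pow_incr; lra).
  lra.
Qed.

Lemma gamma_le (s : C) (k0 k : nat) : 1 <= Cre s -> gamma s (k + k0) <= gamma s k0.
Proof.
  intros Hs. induction k as [|k IH]; [apply Rle_refl|].
  eapply Rle_trans; [apply gamma_S_le, Hs | exact IH].
Qed.

(* The ratio [binom(-s, m+1) / binom(-s, m) = (-s - m) / (m + 1)] has modulus [gamma s m]. *)
Lemma gamma_ratio (s : C) (m : nat) :
  Cmod (Cminus (Copp s) (RtoC (INR m))) / INR (S m) = gamma s m.
Proof.
  rewrite gamma_sqrt, S_INR. pose proof (pos_INR m).
  unfold Cmod. rewrite <- (sqrt_pow2 (INR m + 1)) at 1 by lra.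
  rewrite <- sqrt_div_alt by (apply pow_lt; lra).
  f_equal. unfold Cre, Cim. simpl. field. lra.
Qed.

Lemma Cmod_cbinom_S (s : C) (m : nat) :
  Cmod (cbinom (Copp s) (S m)) = Cmod (cbinom (Copp s) m) * gamma s m.
Proof.
  assert (Hm : 0 < INR (S m)) by apply lt_0_INR, Nat.lt_0_succ.
  assert (Hnz : RtoC (INR (S m)) <> 0).
  { intros E. apply (f_equal fst) in E. change (INR (S m) = 0) in E. lra. }
  change (cbinom (Copp s) (S m))
    with (Cdiv (Cmult (cbinom (Copp s) m) (Cminus (Copp s) (RtoC (INR m)))) (RtoC (INR (S m)))).
  rewrite (Cmod_div _ _ Hnz), Cmod_mult, Cmod_R, Rabs_pos_eq by lra.
  unfold Rdiv. rewrite Rmult_assoc. apply f_equal, gamma_ratio.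
Qed.

Lemma Cmod_cbinom_le (s : C) (k0 k : nat) : 1 <= Cre s ->
  Cmod (cbinom (Copp s) (k + k0)) <= Cmod (cbinom (Copp s) k0) * gamma s k0 ^ k.
Proof.
  intros Hs. induction k as [|k IH]; [simpl; lra|].
  change (S k + k0)%nat with (S (k + k0)). rewrite Cmod_cbinom_S, <- tech_pow_Rmult.
  replace (Cmod (cbinom (Copp s) k0) * (gamma s k0 * gamma s k0 ^ k))
    with (Cmod (cbinom (Copp s) k0) * gamma s k0 ^ k * gamma s k0) by ring.
  apply Rmult_le_compat; [apply Cmod_ge_0 | apply Cmod_ge_0 | exact IH | apply gamma_le, Hs].
Qed.

Lemma Cmod_Cpow_nat (b : C) (k : nat) : Cmod (Cpow_nat b k) = Cmod b ^ k.
Proof.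
  induction k as [|k IH]; simpl; [apply Cmod_1 | rewrite Cmod_mult, IH; ring].
Qed.

Lemma Cmod_binom_dirichlet_term_le (s beta : C) (n0 k0 k : nat) (D : nat -> nat) :
  1 < Cre s -> (2 <= n0)%nat -> (0 < k0)%nat -> (forall n, INR (D n) <= 2 * INR n) ->
  Cmod (Cmult (Cmult (cbinom (Copp s) (k + k0)) (Cpow_nat beta (k + k0)))
              (dirichlet D n0 (Cplus s (RtoC (INR (k + k0)))))) <=
  2 * Cmod beta ^ k0 * Rpower (INR n0 - 1) (2 - Cre s - INR k0) / (Cre s + INR k0 - 2)
    * Cmod (cbinom (Copp s) k0) * (gamma s k0 * Cmod beta / (INR n0 - 1)) ^ k.
Proof.
  intros Hs Hn0 Hk0 HD.
  assert (HN : 1 <= INR n0 - 1) by (apply (le_INR 2) in Hn0; simpl in Hn0; lra).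
  assert (Hk0r : 1 <= INR k0) by (apply (le_INR 1) in Hk0; simpl in Hk0; lra).
  pose proof (pos_INR k) as Hk.
  set (N := INR n0 - 1) in *. set (E := Rpower N (2 - Cre s - INR k0)).
  assert (Hw : Cre (Cplus s (RtoC (INR (k + k0)))) = Cre s + INR k0 + INR k).
  { unfold Cre, Cplus, RtoC. cbn [fst]. rewrite plus_INR. ring. }
  assert (Hshift : Rpower N (2 - Cre (Cplus s (RtoC (INR (k + k0))))) = E / N ^ k).
  { unfold E. rewrite <- Rpower_pow by lra. unfold Rdiv. rewrite <- Rpower_Ropp, <- Rpower_plus.
    f_equal. rewrite Hw. ring. }
  assert (Hdir : Cmod (dirichlet D n0 (Cplus s (RtoC (INR (k + k0)))))
                 <= 2 * (E / N ^ k) / (Cre s + INR k0 - 2)).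
  { eapply Rle_trans.
    - apply dirichlet_Cmod_le with (c := 2); [exact Hn0 | | intros n _; apply HD].
      rewrite Hw. lra.
    - fold N. rewrite Hshift, Hw.
      assert (0 < E / N ^ k) by (apply Rdiv_lt_0_compat; [apply Rpower_gt_0 | apply pow_lt; lra]).
      unfold Rdiv. apply Rmult_le_compat_l; [lra|]. apply Rinv_le_contravar; lra. }
  rewrite !Cmod_mult, Cmod_Cpow_nat.
  apply Rle_trans with (Cmod (cbinom (Copp s) k0) * gamma s k0 ^ k * Cmod beta ^ (k + k0)
                        * (2 * (E / N ^ k) / (Cre s + INR k0 - 2))).
  - apply Rmult_le_compat; auto using Cmod_ge_0.
    + apply Rmult_le_pos; [apply Cmod_ge_0 | apply pow_le, Cmod_ge_0].
    + apply Rmult_le_compat_r; [apply pow_le, Cmod_ge_0 | apply Cmod_cbinom_le; lra].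
  - right. rewrite pow_add. unfold Rdiv. rewrite !Rpow_mult_distr, pow_inv.
    field. split; [apply pow_nonzero |]; lra.
Qed.

Theorem lemmaI4 (s beta : C) (n0 k0 : nat) (D : nat -> nat) :
  1 < Cre s ->
  beta <> RtoC 0 ->
  1 + Cmod beta < INR n0 ->
  (0 < k0)%nat ->
  gamma s k0 < (INR n0 - 1) / Cmod beta ->
  (D = x \/ D = y \/ D = z) ->
  exists l : C,
    is_series (fun k => Cmult (Cmult (cbinom (Copp s) (k + k0)) (Cpow_nat beta (k + k0)))
                              (dirichlet D n0 (Cplus s (RtoC (INR (k + k0)))))) l /\
    Cmod l <=
      2 * Cmod beta ^ k0 * Rpower (INR n0 - 1) (3 - Cre s - INR k0)
      / ((Cre s + INR k0 - 2) * (INR n0 - 1 - gamma s k0 * Cmod beta))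
      * Cmod (cbinom (Copp s) k0).
Proof.
  intros Hs Hbeta Hn0 Hk0 Hgamma HD.
  assert (Hb : 0 < Cmod beta) by now apply Cmod_gt_0.
  assert (Hn2 : (2 <= n0)%nat) by (apply INR_lt; simpl; lra).
  assert (Hk1 : 1 <= INR k0) by (apply (le_INR 1) in Hk0; simpl in Hk0; lra).
  assert (HN : 0 < INR n0 - 1) by lra.
  set (N := INR n0 - 1) in *.
  set (K := 2 * Cmod beta ^ k0 * Rpower N (2 - Cre s - INR k0) / (Cre s + INR k0 - 2)
            * Cmod (cbinom (Copp s) k0)).
  set (q := gamma s k0 * Cmod beta / N).
  assert (Hgb : gamma s k0 * Cmod beta < N) by (apply Rlt_div_r; [lra | exact Hgamma]).
  assert (Hq : 0 <= q < 1).
  { split; [apply Rdiv_le_0_compat; [apply Rmult_le_pos; [apply Cmod_ge_0 | lra] | lra] |].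
    apply (Rdiv_lt_1 _ _ HN), Hgb. }
  pose proof (fun k => Cmod_binom_dirichlet_term_le s beta n0 k0 k D Hs Hn2 Hk0
                         (rhombus_count_le D HD)) as Hterm.
  assert (HK : 0 <= K).
  { eapply Rle_trans; [apply Cmod_ge_0 | rewrite <- (Rmult_1_r K); apply (Hterm O)]. }
  destruct (is_series_C_bounded _ (fun k => K * q ^ k) (K / (1 - q)) Hterm
              (fun M => sum_n_geom_le K q M HK Hq)) as [l [Hl Hlb]].
  exists l. split; [exact Hl|]. eapply Rle_trans; [exact Hlb|]. right.
  replace (3 - Cre s - INR k0) with (2 - Cre s - INR k0 + 1) by ring.
  rewrite Rpower_plus, Rpower_1 by lra.
  unfold K, q. field. repeat split; lra.
Qed.
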